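(* Let $d\ge 1$ and $q\ge 2$ be integers. (a) If $\gcd(d,q)=1$, then the Hamming graph $H(d,q)$ is $\mathbb{Z}_{q^d}$-distance antimagic. In particular, the complete graph $K_q$ is $\mathbb{Z}_q$-distance antimagic for every $q\ge 2$. (b) If both $d$ and $q$ are even, then $H(d,q)$ is not $\mathbb{Z}_{q^d}$-distance antimagic.
   Context: $H(d,q)$ is the graph with vertex set $\mathbb{Z}_q^d$ in which two $d$-tuples are adjacent iff they differ in exactly one coordinate (equivalently the Cartesian product of $d$ copies of $K_q$). $\mathbb{Z}_m$ is the cyclic group of integers modulo $m$. For a graph $G$ with $n$ vertices and an Abelian group $A$ of order $n$ (written additively), and a bijection $f:V(G)\to A$, the weight of $x$ is $w_f(x)=\sum_{y\in N(x)} f(y)$ computed in $A$ ($N(x)$ the open neighbourhood). $f$ is an $A$-distance antimagic labelling if all weights are pairwise distinct; $G$ is $A$-distance antimagic if it admits such a labelling. *)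

From HB Require Import structures.
From mathcomp Require Import all_boot all_order all_algebra.
Set Implicit Arguments. Unset Strict Implicit. Unset Printing Implicit Defensive.
Import GRing.Theory.
Local Open Scope ring_scope.

Definition hvert (d q : nat) := {ffun 'I_d -> 'I_q}.

Definition hadj (d q : nat) (x y : hvert d q) : bool :=
  #|[set i : 'I_d | x i != y i]| == 1%N.

Definition hweight (d q : nat) (A : zmodType) (f : hvert d q -> A)
  (x : hvert d q) : A :=
  \sum_(y : hvert d q | hadj x y) f y.

Definition distance_antimagic_labelling (d q : nat) (A : zmodType)
  (f : hvert d q -> A) : Prop :=
  bijective f /\ injective (hweight f).

(* H(d,q) is Z_{q^d}-distance antimagic. 'Z_(q^d) is the cyclic group of
   order q^d provided q^d >= 2. *)
Definition hamming_Zdistance_antimagic (d q : nat) : Prop :=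
  exists f : hvert d q -> 'Z_(q ^ d), distance_antimagic_labelling f.

From HB Require Import structures.
From mathcomp Require Import all_boot all_order all_algebra.
From mathcomp Require Import zify ring.
Set Implicit Arguments. Unset Strict Implicit. Unset Printing Implicit Defensive.
Import GRing.Theory.

(* Every neighbour of x is obtained by changing one coordinate x_i to another digit a,
   so sums over neighbourhoods split as sums over (i, a) with a <> x_i; in particular
   H(d,q) is d(q-1)-regular.

   (b) If d and q are even, double counting shows that the weights of a bijective
   labelling sum to d(q-1) S, where S is the sum of all elements of Z_{q^d}; since the
   weights are themselves a bijection, this equals S.  But 2S = 0 in any finite abelian
   group and d(q-1) is even, so S = 0, whereas S = n/2 <> 0 in Z_n for n even.

   (a) If gcd(d,q) = 1, label x by its base-q value f(x) = sum_i x_i q^i.  In any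
   commutative ring the weight of such an "evaluation" labelling is an affine function
   k f(x) + c with k = dq - q - d; in Z_{q^d} this k is a unit because it is congruent
   to -d modulo q, so the weights are pairwise distinct. *)

Section Neighbourhood.
Variables d q : nat.

Definition upd (x : hvert d q) (i : 'I_d) (a : 'I_q) : hvert d q :=
  [ffun j => if j == i then a else x j].

Lemma upd_id (x : hvert d q) (i : 'I_d) : upd x i (x i) = x.
Proof. by apply/ffunP => j; rewrite ffunE; case: eqP => // ->. Qed.

Lemma hadj_sym (x y : hvert d q) : hadj x y = hadj y x.
Proof.
rewrite /hadj (_ : [set i | x i != y i] = [set i | y i != x i]) //.
by apply/setP => i; rewrite !inE eq_sym.
Qed.

Lemma hadjE (x y : hvert d q) (i : 'I_d) :
  ([set j | x j != y j] == [set i]) = (y == upd x i (y i)) && (y i != x i).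
Proof.
apply/eqP/andP => [hS | [/eqP hy hne]].
  split; last by have /setP/(_ i) := hS; rewrite !inE eqxx eq_sym.
  apply/eqP/ffunP => j; rewrite ffunE; case: (eqVneq j i) => [-> // | hji].
  by have /setP/(_ j) := hS; rewrite !inE (negbTE hji) => /negbFE/eqP.
apply/setP => j; rewrite hy !inE ffunE.
by case: (eqVneq j i) => [-> | _]; rewrite ?eqxx // eq_sym.
Qed.

Lemma sum_nbr (R : nmodType) (F : hvert d q -> R) (x : hvert d q) :
  (\sum_(y | hadj x y) F y =
   \sum_(i < d) \sum_(a : 'I_q | a != x i) F (upd x i a))%R.
Proof.
have single_coord y : ((if hadj x y then F y else 0) =
    \sum_(i < d) if [set j | x j != y j] == [set i] then F y else 0)%R.
  rewrite -big_mkcond /hadj; case: (boolP (#|_| == 1)%N) => [/cards1P [i0 ->] | hn].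
    by rewrite (big_pred1 i0) // => i; rewrite eq_sym; apply/eqP/eqP => [/set1_inj | ->].
  by rewrite big_pred0 // => i; apply: contraNF hn => /eqP ->; rewrite cards1.
rewrite big_mkcond (eq_bigr _ (fun y _ => single_coord y)) exchange_big /=.
apply: eq_bigr => i _; rewrite -big_mkcond (eq_bigl _ _ (fun y => hadjE x y i)).
rewrite (reindex_onto (upd x i) (fun y => y i)) => [|y /andP [/eqP <-] //].
by apply: eq_bigl => a; rewrite ffunE !eqxx andbT.
Qed.

Lemma card_nbr (x : hvert d q) : #|[set y | hadj x y]| = (d * q.-1)%N.
Proof.
rewrite -sum1dep_card sum_nbr (eq_bigr (fun _ => q.-1)) ?sum_nat_const ?card_ord //.
move=> i _; rewrite sum1dep_card; have := cardC1 (x i); rewrite card_ord => <-.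
by apply: eq_card => a; rewrite !inE.
Qed.
End Neighbourhood.

(* Double counting: every label is counted once by each of its d(q-1) neighbours. *)
Lemma sum_hweight (d q : nat) (A : zmodType) (f : hvert d q -> A) :
  (\sum_x hweight f x = (\sum_y f y) *+ (d * q.-1))%R.
Proof.
rewrite /hweight (eq_bigr _ (fun x _ => big_mkcond _ _)) exchange_big -sumrMnl.
apply: eq_bigr => y _; rewrite -big_mkcond -(card_nbr y) -sumr_const.
by apply: eq_bigl => x; rewrite inE hadj_sym.
Qed.

Lemma sum_bijective (T : finType) (A : finZmodType) (f : T -> A) :
  bijective f -> (\sum_x f x = \sum_(z : A) z)%R.
Proof. by move=> fb; rewrite (reindex f) //; apply: onW_bij. Qed.

(* In Z_n with n = 2m even, the sum of all elements is 'C(n,2) = m(2m-1) = -m <> 0. *)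
Lemma sum_Zp_even_neq0 (n : nat) : (1 < n)%N -> ~~ odd n -> (\sum_(z : 'Z_n) z != 0)%R.
Proof.
move=> n_gt1 n_even.
have sumE : (\sum_(z : 'Z_n) z = ('C((Zp_trunc n).+2, 2))%:R)%R.
  rewrite -bin2_sum big_mkord natr_sum.
  by apply: eq_bigr => z _; rewrite natr_Zp.
have [m n_eq] : exists m, n = (m * 2)%N.
  by exists n./2; rewrite muln2 -{1}(odd_double_half n) (negbTE n_even).
have m_gt0 : (0 < m)%N by lia.
rewrite sumE Zp_cast //; apply/eqP => /(congr1 val); rewrite /= val_Zp_nat // => /eqP.
rewrite -/(dvdn n _) n_eq bin2 -divn2 mulnAC mulnK // dvdn_pmul2l // dvdn2.
by rewrite -subn1 oddB ?oddM ?andbF //; lia.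
Qed.

(* Negation permutes a finite abelian group, so the sum S of its elements has S = -S. *)
Lemma sum_elements_double (A : finZmodType) : ((\sum_(z : A) z) *+ 2 = 0)%R.
Proof.
rewrite mulr2n -[X in (X + _)%R]opprK -sumrN.
rewrite (reindex_inj (@oppr_inj A)) /=.
by rewrite (eq_bigr _ (fun z _ => opprK z)) addNr.
Qed.

Lemma card_hvert (d q : nat) : (1 < q ^ d)%N -> #|hvert d q| = #|'Z_(q ^ d)|.
Proof. by move=> n_gt1; rewrite card_ffun !card_ord Zp_cast. Qed.

(* Part (b): the sum of all weights is both S and d(q-1) S = 0, yet S <> 0 for q^d even. *)
Lemma even_not_antimagic (d q : nat) : (0 < d)%N -> (1 < q)%N -> ~~ odd d -> ~~ odd q ->
  ~ hamming_Zdistance_antimagic d q.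
Proof.
move=> d_gt0 q_gt1 d_even q_even [f [f_bij w_inj]].
have n_gt1 : (1 < q ^ d)%N by rewrite -(expn0 q) ltn_exp2l.
have w_bij : bijective (hweight f) by apply: (inj_card_bij w_inj); rewrite card_hvert.
have deg_even : (d * q.-1 = 2 * (d./2 * q.-1))%N.
  by rewrite mulnA mul2n -{1}(odd_double_half d) (negbTE d_even).
have S_fixed : (\sum_(z : 'Z_(q ^ d)) z = (\sum_(z : 'Z_(q ^ d)) z) *+ (d * q.-1))%R.
  by rewrite -{1}(sum_bijective w_bij) sum_hweight (sum_bijective f_bij).
move: S_fixed; rewrite deg_even mulrnA sum_elements_double mul0rn; apply/eqP.
by apply: sum_Zp_even_neq0; rewrite // oddX (negbTE q_even) orbF -lt0n.
Qed.

Lemma base_value_recl (d q : nat) (x : 'I_d.+1 -> nat) :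
  \sum_(i < d.+1) x i * q ^ i = x ord0 + q * \sum_(i < d) x (lift ord0 i) * q ^ i.
Proof.
rewrite big_ord_recl expn0 muln1 big_distrr /=; congr (_ + _).
by apply: eq_bigr => i _; rewrite expnS mulnCA.
Qed.

Lemma base_value_lt (d q : nat) (x : 'I_d -> nat) :
  (forall i, x i < q) -> \sum_(i < d) x i * q ^ i < q ^ d.
Proof.
elim: d x => [|d IH] x x_lt; first by rewrite big_ord0 expn0.
rewrite base_value_recl expnS.
have := IH _ (fun i => x_lt (lift ord0 i)); have := x_lt ord0; nia.
Qed.

Lemma base_value_inj (d q : nat) (x y : 'I_d -> nat) :
  (forall i, x i < q) -> (forall i, y i < q) ->
  \sum_(i < d) x i * q ^ i = \sum_(i < d) y i * q ^ i -> forall i, x i = y i.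
Proof.
elim: d x y => [|d IH] x y x_lt y_lt; first by move=> _ [].
rewrite !base_value_recl => eq_val.
have q_gt0 : 0 < q by have := x_lt ord0; lia.
have eq0 : x ord0 = y ord0.
  have := congr1 (modn^~ q) eq_val.
  by rewrite ![_ + q * _]addnC ![q * _]mulnC !modnMDl !modn_small.
move: eq_val; rewrite eq0 => /addnI /eqP; rewrite eqn_pmul2l // => /eqP eq_rest.
move=> i; case: (unliftP ord0 i) => [j -> | -> //].
exact: IH (fun j => x_lt _) (fun j => y_lt _) eq_rest j.
Qed.

(* The "evaluation at Q" labelling of H(d,q) in a commutative ring: x |-> sum_i x_i Q^i.
   Its weights are an affine function of the labels. *)
Section EvaluationLabel.
Variables (d q : nat) (R : comNzRingType) (Q : R).
Local Open Scope ring_scope.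

Definition eval_label (x : hvert d q) : R := \sum_(i < d) (x i : nat)%:R * Q ^+ i.

Let digit_sum : R := \sum_(a : 'I_q) (a : nat)%:R.

Lemma eval_label_upd (x : hvert d q) (i : 'I_d) (a : 'I_q) :
  eval_label (upd x i a) = eval_label x + ((a : nat)%:R - (x i : nat)%:R) * Q ^+ i.
Proof.
rewrite /eval_label (bigD1 i) //= [in RHS](bigD1 i) //= ffunE eqxx.
rewrite (eq_bigr (fun j : 'I_d => (x j : nat)%:R * Q ^+ j)) => [|j /negbTE j_neq].
  by set T := \sum_(j < d | j != i) _; ring.
by rewrite ffunE j_neq.
Qed.

Lemma sum_upd_coord (x : hvert d q) (i : 'I_d) :
  \sum_(a : 'I_q | a != x i) eval_label (upd x i a) =
  eval_label x * (q%:R - 1) + (digit_sum - (x i : nat)%:R *+ q) * Q ^+ i.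
Proof.
have all_digits : \sum_(a : 'I_q) eval_label (upd x i a) =
    eval_label x *+ q + (digit_sum - (x i : nat)%:R *+ q) * Q ^+ i.
  rewrite (eq_bigr _ (fun a _ => eval_label_upd x i a)) big_split sumr_const card_ord.
  by rewrite -mulr_suml sumrB sumr_const card_ord.
move: all_digits; rewrite (bigD1 (x i)) //= upd_id => /(canRL (addKr _)) ->.
by rewrite addrA [- _ + _]addrC mulrBr mulr1 mulr_natr.
Qed.

Lemma hweight_eval_label (x : hvert d q) :
  hweight eval_label x =
  eval_label x * ((d * q)%:R - q%:R - d%:R) + digit_sum * \sum_(i < d) Q ^+ i.
Proof.
rewrite /hweight sum_nbr (eq_bigr _ (fun i _ => sum_upd_coord x i)) big_split /=.
rewrite sumr_const card_ord.
under eq_bigr do rewrite mulrBl mulrnAl.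
rewrite sumrB -mulr_sumr sumrMnl -/(eval_label x) natrM.
move: (eval_label x) digit_sum (\sum_(i < d) Q ^+ i) => e A s.
by rewrite -[e * _ *+ d]mulr_natr -[e *+ q]mulr_natr; ring.
Qed.
End EvaluationLabel.

(* The weight factor dq - q - d, represented by the natural number q^d + dq - q - d,
   is coprime to q^d: it is congruent to -d modulo q, and gcd(d,q) = 1. *)
Lemma weight_factor_coprime (d q : nat) : 0 < d -> 1 < q -> coprime d q ->
  coprime (q ^ d) (q ^ d + d * q - q - d).
Proof.
move=> d_gt0 q_gt1 dq_coprime; apply: coprimeXl.
set k := (q ^ d + d * q - q - d)%N.
have qd_eq : q ^ d = q * q ^ d.-1 by rewrite -expnS prednK.
have t_gt0 : 0 < q ^ d.-1 by rewrite expn_gt0; lia.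
have k_add_d : (k + d = q * (q ^ d.-1 + d - 1))%N.
  by move: t_gt0; rewrite /k qd_eq; set t := q ^ d.-1; nia.
have g_dvd_d : gcdn q k %| d.
  rewrite -(dvdn_addr _ (dvdn_gcdr q k)) k_add_d; exact/dvdn_mulr/dvdn_gcdl.
by rewrite /coprime -dvdn1 -(eqP dq_coprime) dvdn_gcd g_dvd_d dvdn_gcdl.
Qed.

(* Part (a): for gcd(d,q) = 1 the base-q value labelling is distance antimagic, since
   its weight map is x |-> k f(x) + c with k a unit of Z_{q^d}. *)
Lemma coprime_antimagic (d q : nat) : 0 < d -> 1 < q -> coprime d q ->
  hamming_Zdistance_antimagic d q.
Proof.
move=> d_gt0 q_gt1 dq_coprime.
have n_gt1 : (1 < q ^ d)%N by rewrite -(expn0 q) ltn_exp2l.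
pose f := @eval_label d q 'Z_(q ^ d) q%:R.
have f_val x : nat_of_ord (f x) = \sum_(i < d) x i * q ^ i.
  have -> : f x = (\sum_(i < d) x i * q ^ i)%:R%R.
    by rewrite natr_sum; apply: eq_bigr => i _; rewrite natrM natrX.
  by rewrite val_Zp_nat // modn_small // base_value_lt.
have f_inj : injective f.
  move=> x y /(congr1 (@nat_of_ord _)); rewrite !f_val.
  move/(base_value_inj (fun i => ltn_ord (x i)) (fun i => ltn_ord (y i))) => eq_digits.
  by apply/ffunP => i; apply/val_inj/eq_digits.
have q_le : q <= q ^ d by rewrite -{1}(expn1 q) leq_pexp2l //; lia.
have factorE : ((d * q)%:R - q%:R - d%:R = (q ^ d + d * q - q - d)%:R :> 'Z_(q ^ d))%R.
  apply: (@addIr _ (q + d)%:R%R); rewrite -natrD.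
  have -> : (q ^ d + d * q - q - d + (q + d) = q ^ d + d * q)%N by nia.
  by rewrite !natrD char_Zp // add0r; ring.
have factor_unit : ((q ^ d + d * q - q - d)%:R : 'Z_(q ^ d))%R \is a GRing.unit.
  by rewrite unitZpE // weight_factor_coprime.
exists f; split; first by apply: (inj_card_bij f_inj); rewrite card_hvert.
by move=> x y; rewrite !hweight_eval_label factorE => /addIr /(mulIr factor_unit) /f_inj.
Qed.

Theorem mainTheorem3 (d q : nat) (hd : (1 <= d)%N) (hq : (2 <= q)%N) :
  (coprime d q -> hamming_Zdistance_antimagic d q) /\
  (hamming_Zdistance_antimagic 1 q) /\
  (~~ odd d -> ~~ odd q -> ~ hamming_Zdistance_antimagic d q).
Proof.
split; first exact: coprime_antimagic.
split; first by apply: coprime_antimagic; rewrite // /coprime gcd1n.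
exact: even_not_antimagic.
Qed.
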